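(* Let $u\in\mathrm{BMO}(\mathbb R)$ be complex-valued and let $\varphi:\mathbb R\to\mathbb C$ satisfy $|\varphi(x)|\le Ce^{-|x|}$ for some $C>0$. If $\|u\|_*<C_{JN}$, then there is a constant $C(u)$, given in terms of $\|u\|_*$ (and $C$), such that for all $x\in\mathbb R$, $y>0$, $$\int_{\mathbb R}|\varphi_y(x-t)|\,e^{|u(t)-u_{I(x,y)}|}\,dt\le C(u).$$
   Context: $u_I=|I|^{-1}\int_Iu$, $\|u\|_*=\sup_I|I|^{-1}\int_I|u-u_I|$ over bounded intervals, $\mathrm{BMO}(\mathbb R)=\{\|u\|_*<\infty\}$. $C_0,C_{JN}>0$ are universal constants with $|I|^{-1}|\{t\in I:|u(t)-u_I|\ge\lambda\}|\le C_0\exp(-C_{JN}\lambda/\|u\|_* )$ for all $u\in\mathrm{BMO}$, bounded $I$, $\lambda>0$. $\varphi_y(x)=y^{-1}\varphi(x/y)$, $I(x,y)=(x-y,x+y)$. *)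

From HB Require Import structures.
From mathcomp Require Import all_boot all_order all_algebra.
From mathcomp Require Import all_classical all_reals all_analysis.
Set Implicit Arguments. Unset Strict Implicit. Unset Printing Implicit Defensive.
Import Order.TTheory GRing.Theory Num.Theory.
Import numFieldNormedType.Exports.
Local Open Scope classical_set_scope.
Local Open Scope ring_scope.

(* A complex-valued function u : R -> C is represented by its real part ur
   and imaginary part ui.  The modulus of a complex number (p, q) is
   sqrt(p^2 + q^2). *)
Definition cabs {R : realType} (p q : R) : R := Num.sqrt (p ^+ 2 + q ^+ 2).


Definition ravg {R : realType} (f : R -> R) (a b : R) : R :=
  (b - a)^-1 * fine (\int[lebesgue_measure]_(t in [set t : R | (a < t < b)%R]) (f t)%:E)%E.

Definition cdev {R : realType} (ur ui : R -> R) (a b t : R) : R :=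
  cabs (ur t - ravg ur a b) (ui t - ravg ui a b).

Definition mean_osc {R : realType} (ur ui : R -> R) (a b : R) : \bar R :=
  ((b - a)^-1)%:E *
  (\int[lebesgue_measure]_(t in [set t : R | (a < t < b)%R]) (cdev ur ui a b t)%:E)%E.

Definition bmo_norm {R : realType} (ur ui : R -> R) : \bar R :=
  ereal_sup [set mean_osc ur ui ab.1 ab.2 | ab in [set ab : R * R | ab.1 < ab.2]].

Definition loc_int {R : realType} (f : R -> R) : Prop :=
  forall a b : R, lebesgue_measure.-integrable [set t : R | (a < t < b)%R] (EFin \o f).

Definition in_BMO {R : realType} (ur ui : R -> R) : Prop :=
  loc_int ur /\ loc_int ui /\ (bmo_norm ur ui < +oo)%E.

Definition JN_constants {R : realType} (C0 CJN : R) : Prop :=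
  forall (ur ui : R -> R) (a b lam : R), in_BMO ur ui -> a < b -> 0 < lam ->
    (((b - a)^-1)%:E *
       lebesgue_measure [set t : R | ((a < t < b) /\ (lam <= cdev ur ui a b t))%R]
     <= (C0 * expR (- (CJN * lam / fine (bmo_norm ur ui))))%:E)%E.

(* Write N = ||u||_* and I = I(x, y).  Split the line into the dyadic annuli
   2^(k-1) y <= |x - t| < 2^k y.  On the k-th annulus the kernel is at most
   C y^-1 e^(1 - 2^(k-1)), and |u - u_I| <= |u - u_(2^k I)| + 2 k N, since
   the averages of u over consecutive dilates of I differ by at most 2 N.  As
   N < C_JN, the John-Nirenberg inequality bounds the mean of exp |u - u_J|
   over every interval J by a constant A(N) (sum the level sets
   {|u - u_J| >= n} against e^(n+1)).  Hence the k-th annulus contributes at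
   most 2 C A(N) 2^k e^(1 - 2^(k-1)) e^(2 k N), which is dominated by a
   geometric sequence. *)

From mathcomp Require Import all_boot all_order all_algebra.
From mathcomp Require Import all_classical all_reals all_analysis.
From mathcomp Require Import measurable_realfun ring lra.
Import Order.TTheory GRing.Theory Num.Theory.

Set Implicit Arguments.
Unset Strict Implicit.
Unset Printing Implicit Defensive.
Local Open Scope classical_set_scope.
Local Open Scope ring_scope.

Section real_line.
Context {R : realType}.
Implicit Types (p q a b c : R) (f g : R -> R).

Local Notation mu := (@lebesgue_measure R).
Local Notation Ioo a b := [set t : R | (a < t < b)%R].

Lemma cabs_ge0 p q : 0 <= cabs p q.
Proof. exact: sqrtr_ge0. Qed.

Lemma sqr_cabs p q : cabs p q ^+ 2 = p ^+ 2 + q ^+ 2.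
Proof. by rewrite /cabs sqr_sqrtr // addr_ge0 // sqr_ge0. Qed.

Lemma cabsr0 p : cabs p 0 = `|p|.
Proof. by rewrite /cabs expr0n addr0 sqrtr_sqr. Qed.

Lemma cabs0r q : cabs 0 q = `|q|.
Proof. by rewrite /cabs expr0n add0r sqrtr_sqr. Qed.

Lemma cabsN p q : cabs (- p) (- q) = cabs p q.
Proof. by rewrite /cabs !sqrrN. Qed.

Lemma cabs_dot_le p q p' q' : p * p' + q * q' <= cabs p q * cabs p' q'.
Proof.
rewrite /cabs -sqrtrM ?addr_ge0 ?sqr_ge0 //.
apply: le_trans (ler_norm _) _; rewrite -sqrtr_sqr ler_sqrt; last first.
  by rewrite mulr_ge0 // addr_ge0 // sqr_ge0.
have : 0 <= (p * q' - q * p') ^+ 2 by exact: sqr_ge0.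
nra.
Qed.

Lemma ler_cabsD p q p' q' : cabs (p + p') (q + q') <= cabs p q + cabs p' q'.
Proof.
rewrite -(ger0_norm (addr_ge0 (cabs_ge0 p q) (cabs_ge0 p' q'))) -sqrtr_sqr.
rewrite {1}/cabs ler_sqrt ?sqr_ge0 //.
have := cabs_dot_le p q p' q'; have := sqr_cabs p q; have := sqr_cabs p' q'.
nra.
Qed.

Lemma cabs_le_normD p q : cabs p q <= `|p| + `|q|.
Proof.
by rewrite -cabsr0 -cabs0r -[X in cabs X _]addr0 -[X in cabs _ X]add0r ler_cabsD.
Qed.

Lemma measurable_cabs f g : measurable_fun (setT : set (measurableTypeR R)) f ->
  measurable_fun setT g -> measurable_fun setT (fun t => cabs (f t) (g t)).
Proof.
move=> mf mg; apply: measurableT_comp.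
  exact: continuous_measurable_fun (@sqrt_continuous R).
by apply: measurable_funD; exact: measurable_funX.
Qed.

Lemma set_Ioo_itv a b : Ioo a b = `]a, b[%classic.
Proof. by apply/seteqP; split => t /=; rewrite in_itv. Qed.

Lemma measurable_Ioo a b : measurable (Ioo a b : set (measurableTypeR R)).
Proof. by rewrite set_Ioo_itv; have := @measurable_itv R `]a, b[. Qed.

Lemma lebesgue_measure_Ioo a b : a < b -> mu (Ioo a b) = (b - a)%:E.
Proof. by move=> ab; rewrite set_Ioo_itv lebesgue_measure_itv /= lte_fin ab -EFinD. Qed.

Lemma loc_int_cst c : loc_int (cst c).
Proof.
move=> a b; have [ab|ba] := ltP a b.
  apply/integrableP; split; first exact/measurable_EFinP/measurable_cst.
  rewrite (_ : (fun _ => _) = cst `|c|%:E) // integral_cst; last exact: measurable_Ioo.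
  by rewrite [X in (_ * X)%E]lebesgue_measure_Ioo // -EFinM ltry.
suff -> : Ioo a b = set0 by exact: integrable_set0.
by apply/seteqP; split => // t /= /andP[ta tb]; have := lt_trans ta tb; rewrite ltNge ba.
Qed.

Lemma loc_intD f g : loc_int f -> loc_int g -> loc_int (fun t => f t + g t).
Proof.
move=> hf hg a b; have mI := measurable_Ioo a b.
by apply: eq_integrable mI _ _ _ (integrableD mI (hf a b) (hg a b)).
Qed.

Lemma loc_intZ k f : loc_int f -> loc_int (fun t => k * f t).
Proof.
move=> hf a b; have mI := measurable_Ioo a b.
by apply: eq_integrable mI _ _ _ (integrableZl mI k (hf a b)).
Qed.

Lemma loc_int_normB f c : loc_int f -> loc_int (fun t => `|f t - c|).
Proof.
move=> hf a b; have mI := measurable_Ioo a b.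
by apply: eq_integrable mI _ _ _ (integrable_abse (integrableB mI (hf a b) (loc_int_cst c a b))).
Qed.

Lemma loc_int_measurable f : loc_int f -> measurable_fun (setT : set (measurableTypeR R)) f.
Proof.
move=> hf; rewrite (_ : setT = \bigcup_n Ioo (- n%:R) n%:R).
  apply/measurable_fun_bigcup => n; first exact: measurable_Ioo.
  by apply/measurable_EFinP; exact: measurable_int (hf _ _).
apply/seteqP; split => // t _; exists (Num.truncn `|t|).+1 => //=.
by rewrite -ltr_norml; exact: Num.Theory.truncnS_gt.
Qed.

Lemma Rintegral_ravg f a b : a < b -> \int[mu]_(t in Ioo a b) f t = (b - a) * ravg f a b.
Proof. by move=> ab; rewrite /ravg mulrA divff ?mul1r // subr_eq0 gt_eqF. Qed.

Lemma le_Rintegral_Ioo f a b a' b' : loc_int f -> (forall t, 0 <= f t) ->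
  a <= a' -> b' <= b -> \int[mu]_(t in Ioo a' b') f t <= \int[mu]_(t in Ioo a b) f t.
Proof.
move=> hf f0 aa' bb'; have mI := measurable_Ioo.
have fin c d := integrable_fin_num (mI c d) (hf c d).
apply: fine_le; [exact: fin..|].
apply: ge0_subset_integral => //; first exact: measurable_int (hf _ _).
  by move=> t _; rewrite lee_fin.
by move=> t /= /andP[at' tb']; rewrite (le_lt_trans aa' at') (lt_le_trans tb' bb').
Qed.

Lemma Rintegral_lincomb f g (A B K : R) a b : loc_int f -> loc_int g -> a < b ->
  \int[mu]_(t in Ioo a b) (A * f t + B * g t - K)
    = (b - a) * (A * ravg f a b + B * ravg g a b - K).
Proof.
move=> hf hg ab; have mI := measurable_Ioo a b.
have [hAf hBg] := (loc_intZ A hf a b, loc_intZ B hg a b).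
have hAB := loc_intD (loc_intZ A hf) (loc_intZ B hg) a b.
have hK := loc_int_cst K a b.
rewrite RintegralB // RintegralD // !RintegralZl // Rintegral_cst // !Rintegral_ravg //.
by rewrite [X in fine X]lebesgue_measure_Ioo //=; ring.
Qed.

Section averages.
Variables ur ui : R -> R.

Definition avg_dist a b a' b' : R :=
  cabs (ravg ur a b - ravg ur a' b') (ravg ui a b - ravg ui a' b').

Lemma avg_distC a b a' b' : avg_dist a b a' b' = avg_dist a' b' a b.
Proof. by rewrite /avg_dist -cabsN !opprB. Qed.

Lemma avg_dist_le a b a' b' a'' b'' :
  avg_dist a b a'' b'' <= avg_dist a b a' b' + avg_dist a' b' a'' b''.
Proof.
rewrite /avg_dist -[ravg ur a b - _](subrKA (ravg ur a' b')).
by rewrite -[ravg ui a b - _](subrKA (ravg ui a' b')) ler_cabsD.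
Qed.

Lemma cdev_le_avg_dist a b a' b' t :
  cdev ur ui a b t <= cdev ur ui a' b' t + avg_dist a' b' a b.
Proof.
rewrite /cdev /avg_dist -[ur t - ravg ur a b](subrKA (ravg ur a' b')).
by rewrite -[ui t - ravg ui a b](subrKA (ravg ui a' b')) ler_cabsD.
Qed.

Hypotheses (hr : loc_int ur) (hi : loc_int ui).

Lemma measurable_cdev a b : measurable_fun (setT : set (measurableTypeR R)) (cdev ur ui a b).
Proof. by apply: measurable_cabs; apply: measurable_funB => //; exact: loc_int_measurable. Qed.

Lemma loc_int_cdev a b : loc_int (cdev ur ui a b).
Proof.
move=> c d; have mI := measurable_Ioo c d.
have hg := loc_intD (loc_int_normB (ravg ur a b) hr) (loc_int_normB (ravg ui a b) hi) c d.
apply: (le_integrable mI _ _ hg).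
  by apply/measurable_EFinP; apply: (measurable_funS measurableT) => //; exact: measurable_cdev.
move=> t _ /=; rewrite lee_fin ger0_norm ?cabs_ge0 // ger0_norm ?addr_ge0 //.
exact: cabs_le_normD.
Qed.

(* Pair u - u_I on I' with the constant w = u_I' - u_I: its integral over I'
   is |I'| |w|^2, and Cauchy-Schwarz in R^2 bounds it by |w| \int_I' |u - u_I|. *)
Lemma avg_dist_subset_le a b a' b' : a <= a' -> a' < b' -> b' <= b ->
  (b' - a') * avg_dist a' b' a b <= \int[mu]_(t in Ioo a b) cdev ur ui a b t.
Proof.
move=> aa' ab' bb'; have mI := measurable_Ioo a' b'.
set N := avg_dist a' b' a b; set c := ravg ur a b; set c' := ravg ui a b.
set A := ravg ur a' b' - c; set B := ravg ui a' b' - c'.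
have int_dot : \int[mu]_(t in Ioo a' b') (A * ur t + B * ui t - (A * c + B * c'))
    = (b' - a') * N ^+ 2.
  by rewrite Rintegral_lincomb // sqr_cabs /A /B /c /c'; ring.
have dot_le : \int[mu]_(t in Ioo a' b') (A * ur t + B * ui t - (A * c + B * c'))
    <= N * \int[mu]_(t in Ioo a' b') cdev ur ui a b t.
  have [hcdev hNcdev] := (loc_int_cdev a b a' b', loc_intZ N (loc_int_cdev a b) a' b').
  have := loc_intD (loc_intD (loc_intZ A hr) (loc_intZ B hi)) (loc_int_cst (- (A * c + B * c'))).
  move=> /(_ a' b') hlin; rewrite -RintegralZl //; apply: le_Rintegral => // t _.
  rewrite (_ : _ - _ = A * (ur t - c) + B * (ui t - c')); last by ring.
  exact: cabs_dot_le.
have N0 : 0 <= N := cabs_ge0 _ _.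
have [->|N_neq0] := eqVneq N 0.
  by rewrite mulr0 Rintegral_ge0 // => t _; exact: cabs_ge0.
have N_gt0 : 0 < N by rewrite lt_def N_neq0 N0.
have sub := le_Rintegral_Ioo (loc_int_cdev a b) (fun t => cabs_ge0 _ _) aa' bb'.
rewrite -(ler_pM2l N_gt0) mulrCA -expr2 -int_dot.
exact: le_trans dot_le (ler_wpM2l N0 sub).
Qed.

End averages.

Lemma bmo_norm_ge0 (ur ui : R -> R) : (0 <= bmo_norm ur ui)%E.
Proof.
apply: le_trans (ereal_sup_ubound _); last by exists (0, 1) => //=; exact: ltr01.
rewrite /mean_osc mule_ge0 // ?lee_fin ?invr_ge0 ?subr_ge0 ?ler01 //.
by apply: integral_ge0 => t _; rewrite lee_fin cabs_ge0.
Qed.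

Lemma fine_bmo_norm_ge0 (ur ui : R -> R) : 0 <= fine (bmo_norm ur ui).
Proof. by rewrite fine_ge0 // bmo_norm_ge0. Qed.

Section bounded_mean_oscillation.
Variables ur ui : R -> R.
Hypothesis u_BMO : in_BMO ur ui.
Implicit Types x y : R.

Local Notation m := (fine (bmo_norm ur ui)).

Lemma bmo_normE : bmo_norm ur ui = m%:E.
Proof. by case: u_BMO => _ [_ ?]; rewrite fineK // ge0_fin_numE // bmo_norm_ge0. Qed.

Lemma Rintegral_cdev_le a b : a < b ->
  \int[mu]_(t in Ioo a b) cdev ur ui a b t <= (b - a) * m.
Proof.
move=> ab; have [hr [hi _]] := u_BMO.
have : (mean_osc ur ui a b <= bmo_norm ur ui)%E by apply: ereal_sup_ubound; exists (a, b).
rewrite bmo_normE /mean_osc -[X in (_ * X)%E]fineK; last first.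
  by have := integrable_fin_num (measurable_Ioo a b) (loc_int_cdev hr hi a b a b).
by rewrite -EFinM lee_fin -ler_pdivlMl ?invr_gt0 ?subr_gt0 // invrK.
Qed.

Lemma avg_dist_double_le x p : 0 < p ->
  avg_dist ur ui (x - p) (x + p) (x - 2 * p) (x + 2 * p) <= 2 * m.
Proof.
move=> p0; have [hr [hi _]] := u_BMO.
have [h1 h2 h3 h4] : [/\ x - 2 * p <= x - p, x - p < x + p, x + p <= x + 2 * p
                      & x - 2 * p < x + 2 * p] by split; lra.
have := le_trans (avg_dist_subset_le hr hi h1 h2 h3) (Rintegral_cdev_le h4).
rewrite (_ : x + p - (x - p) = 2 * p); last by ring.
rewrite (_ : x + 2 * p - (x - 2 * p) = 2 * p * 2); last by ring.
by rewrite -[2 * p * 2 * m]mulrA ler_pM2l ?mulr_gt0.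
Qed.

Lemma avg_dist_dyadic_le x y k : 0 < y ->
  avg_dist ur ui (x - 2 ^+ k * y) (x + 2 ^+ k * y) (x - y) (x + y) <= 2 * m * k%:R.
Proof.
move=> y0; elim: k => [|k IH].
  by rewrite expr0 mul1r /avg_dist !subrr cabsr0 normr0 mulr0.
have p0 : 0 < 2 ^+ k * y by rewrite mulr_gt0 ?exprn_gt0.
apply: le_trans (avg_dist_le _ _ _ _ (x - 2 ^+ k * y) (x + 2 ^+ k * y) _ _) _.
rewrite avg_distC exprS -mulrA -[k.+1%:R]natr1 mulrDr mulr1 addrC.
exact: lerD IH (avg_dist_double_le x p0).
Qed.

End bounded_mean_oscillation.

Lemma nneseries_ge_term (u : nat -> \bar R) N : (forall n, (0 <= u n)%E) ->
  (u N <= \sum_(n <oo) u n)%E.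
Proof.
move=> u0; apply: le_trans (nneseries_lim_ge N.+1 (fun n _ _ => u0 n)).
by rewrite big_nat_recr //= leeDr // sume_ge0.
Qed.

Lemma nneseries_geometric_le a (z : R) : 0 <= a -> 0 < z -> z < 1 ->
  (\sum_(n <oo) (a * z ^+ n)%:E <= (a / (1 - z))%:E)%E.
Proof.
move=> a0 z0 z1; apply: lime_le.
  by apply: is_cvg_nneseries => n _ _; rewrite lee_fin mulr_ge0 // exprn_ge0 // ltW.
apply: nearW => n /=; rewrite sumEFin lee_fin.
by have := geometric_le_lim n a0 z0; rewrite ger0_norm ?(ltW z0) //; apply.
Qed.

Lemma expR_le_pow_truncn (s : R) : 0 <= s -> expR s <= expR 1 ^+ (Num.truncn s).+1.
Proof.
move=> s0; rewrite -expRM_natl mulr1 ler_expR ltW //.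
exact: Num.Theory.truncnS_gt.
Qed.

(* For m = 0 the John-Nirenberg hypothesis says nothing (the exponent
   CJN * lam / 0 is 0); the level sets are then null by Chebyshev, and any
   rate below 1/e will do. *)
Definition jn_rate (CJN m : R) : R := if 0 < m then expR (- (CJN / m)) else expR (-2).

Definition exp_mean_bound (C0 CJN m : R) : R :=
  expR 1 * Num.max C0 1 / (1 - expR 1 * jn_rate CJN m).

Lemma jn_rate_gt0 (CJN m : R) : 0 < jn_rate CJN m.
Proof. by rewrite /jn_rate; case: ifP => _; exact: expR_gt0. Qed.

Lemma expR1_jn_rate_lt1 (CJN m : R) : 0 <= m -> m < CJN -> expR 1 * jn_rate CJN m < 1.
Proof.
move=> m0 mC; rewrite /jn_rate; case: ifPn => hm; rewrite -expRD expR_lt1.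
  by rewrite subr_lt0 ltr_pdivlMr // mul1r.
lra.
Qed.

Lemma exp_mean_bound_gt0 (C0 CJN m : R) : 0 <= m -> m < CJN ->
  0 < exp_mean_bound C0 CJN m.
Proof.
move=> m0 mC; have := expR1_jn_rate_lt1 m0 mC; rewrite -subr_gt0 => rate_lt1.
by rewrite /exp_mean_bound !mulr_gt0 ?expR_gt0 ?invr_gt0 // lt_max ltr01 orbT.
Qed.

Section John_Nirenberg.
Variables (C0 CJN : R) (ur ui : R -> R).
Hypotheses (C0_gt0 : 0 < C0) (JN : JN_constants C0 CJN) (u_BMO : in_BMO ur ui).

Local Notation m := (fine (bmo_norm ur ui)).
Local Notation level a b n := [set t : R | (n%:R <= cdev ur ui a b t)%R].

Lemma measurable_level a b n : measurable (level a b n : set (measurableTypeR R)).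
Proof.
have [hr [hi _]] := u_BMO.
have := measurable_cdev hr hi a b measurableT (measurable_itv `[n%:R, +oo[).
rewrite setTI (_ : _ @^-1` _ = level a b n) //.
by apply/seteqP; split => t /=; rewrite in_itv /= andbT.
Qed.

Lemma measure_level_le_Rintegral a b n : (0 < n)%N ->
  (mu (level a b n `&` Ioo a b) <= (\int[mu]_(t in Ioo a b) cdev ur ui a b t)%:E)%E.
Proof.
move=> n_gt0; have [hr [hi _]] := u_BMO; have mI := measurable_Ioo a b.
have mS := measurable_level a b n.
rewrite fineK; last by have := integrable_fin_num mI (loc_int_cdev hr hi a b a b).
rewrite -integral_indic //; apply: ge0_le_integral => //.
- by apply/measurable_EFinP; apply: (measurable_funS measurableT) => //; exact: measurable_indic.
- by apply/measurable_EFinP; apply: (measurable_funS measurableT) => //; exact: measurable_cdev.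
move=> t _; rewrite lee_fin indicE.
case: (boolP (t \in _)) => [/set_mem|_]; last exact: cabs_ge0.
by apply: le_trans; rewrite ler1n.
Qed.

Lemma measure_level_le a b n : a < b ->
  (mu (level a b n `&` Ioo a b) <= ((b - a) * Num.max C0 1 * jn_rate CJN m ^+ n)%:E)%E.
Proof.
move=> ab; have ba : 0 < b - a by rewrite subr_gt0.
have [->|n_gt0] := posnP n.
  rewrite expr0 mulr1.
  apply: le_trans (measureIr _ (measurable_level _ _ _) (measurable_Ioo a b)) _.
  rewrite [X in (X <= _)%E]lebesgue_measure_Ioo // lee_fin.
  by rewrite ler_peMr ?(ltW ba) // le_max lexx orbT.
have [m_gt0|m_le0] := ltP 0 m; last first.
  have m0 : m = 0 by apply/eqP; rewrite eq_le m_le0 fine_bmo_norm_ge0.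
  apply: le_trans (measure_level_le_Rintegral a b n_gt0) _.
  rewrite lee_fin; apply: le_trans (Rintegral_cdev_le u_BMO ab) _.
  by rewrite m0 mulr0 !mulr_ge0 ?exprn_ge0 ?ltW ?jn_rate_gt0 // lt_max C0_gt0.
have := JN u_BMO ab (_ : 0 < n%:R); rewrite ltr0n => /(_ n_gt0) JNn.
rewrite setIC; set X := mu _ in JNn *.
have -> : X = ((b - a)%:E * (((b - a)^-1)%:E * X))%E.
  by rewrite muleA -EFinM divff ?gt_eqF // mul1e.
rewrite -mulrA EFinM lee_pmul2l ?lte_fin //; apply: le_trans JNn _.
rewrite lee_fin /jn_rate m_gt0 -expRM_natl.
rewrite (_ : n%:R * - (CJN / m) = - (CJN * n%:R / m)); last by ring.
by rewrite ler_wpM2r ?expR_ge0 // le_max lexx.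
Qed.

Lemma integral_expR_cdev_le_levels a b :
  (\int[mu]_(t in Ioo a b) (expR (cdev ur ui a b t))%:E
    <= \sum_(n <oo) ((expR 1 ^+ n.+1)%:E * mu (level a b n `&` Ioo a b)))%E.
Proof.
have [hr [hi _]] := u_BMO; have mI := measurable_Ioo a b.
pose g n (t : R) : \bar R := (expR 1 ^+ n.+1 * \1_(level a b n) t)%:E.
have g0 n t : (0 <= g n t)%E by rewrite lee_fin mulr_ge0 ?exprn_ge0 ?expR_ge0.
have m_indic n : measurable_fun (Ioo a b) (\1_(level a b n) : R -> R).
  apply: (measurable_funS measurableT) => //.
  exact: measurable_indic (measurable_level a b n).
have mg n : measurable_fun (Ioo a b) (g n).
  by apply/measurable_EFinP; apply: measurable_funM.
apply: (@le_trans _ _ (\int[mu]_(t in Ioo a b) \sum_(n <oo) g n t)%E).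
  apply: ge0_le_integral => //.
  - apply/measurable_EFinP; apply: measurableT_comp => //.
    by apply: (measurable_funS measurableT) => //; exact: measurable_cdev.
  - by apply: ge0_emeasurable_sum => k *; [exact: g0|exact: mg].
  move=> t _; apply: le_trans (nneseries_ge_term (Num.truncn (cdev ur ui a b t)) (g0^~ t)).
  rewrite /g indicE mem_set; last by rewrite /= Num.Theory.truncn_le cabs_ge0.
  by rewrite mulr1 lee_fin expR_le_pow_truncn ?cabs_ge0.
rewrite integral_nneseries //; apply: lee_nneseries => [n _ _|n _].
  exact: integral_ge0.
rewrite /g; under eq_integral do rewrite EFinM.
rewrite ge0_integralZl_EFin ?exprn_ge0 ?expR_ge0 //; last by apply/measurable_EFinP; exact: m_indic.
by rewrite integral_indic //; exact: measurable_level.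
Qed.

Lemma integral_expR_cdev_le a b : m < CJN -> a < b ->
  (\int[mu]_(t in Ioo a b) (expR (cdev ur ui a b t))%:E
    <= ((b - a) * exp_mean_bound C0 CJN m)%:E)%E.
Proof.
move=> mC ab; apply: le_trans (integral_expR_cdev_le_levels a b) _.
have z0 : 0 < expR 1 * jn_rate CJN m by rewrite mulr_gt0 ?expR_gt0 ?jn_rate_gt0.
have z1 := expR1_jn_rate_lt1 (fine_bmo_norm_ge0 ur ui) mC.
have a0 : 0 <= (b - a) * Num.max C0 1 * expR 1.
  by rewrite !mulr_ge0 ?expR_ge0 ?subr_ge0 ?(ltW ab) // le_max ler01 orbT.
rewrite (_ : _ * exp_mean_bound _ _ _ = (b - a) * Num.max C0 1 * expR 1
    / (1 - expR 1 * jn_rate CJN m)); last by rewrite /exp_mean_bound; ring.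
apply: le_trans (nneseries_geometric_le a0 z0 z1).
apply: lee_nneseries => [n _ _|n _]; first by rewrite mule_ge0 ?lee_fin ?exprn_ge0 ?expR_ge0.
apply: le_trans (lee_wpmul2l _ (measure_level_le n ab)) _.
  by rewrite lee_fin exprn_ge0 ?expR_ge0.
by rewrite -EFinM lee_fin exprMn exprS le_eqVlt; apply/orP; left; apply/eqP; ring.
Qed.

End John_Nirenberg.

(* J = dyadic_order m is chosen with 2^J > 2 e^(2m): the bound
   e^(-s) <= J! / s^J at s = 2^(k-1) then dominates
   2^k e^(1 - 2^(k-1)) e^(2mk) by a geometric sequence of ratio 2 e^(2m) / 2^J. *)
Definition dyadic_order (m : R) : nat := (Num.truncn (4 * expR (2 * m))).+1.

Definition dyadic_ratio (m : R) : R := 2 * expR (2 * m) / 2 ^+ dyadic_order m.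

Definition dyadic_const (m : R) : R :=
  expR 1 * (dyadic_order m)`!%:R * 2 ^+ dyadic_order m.

Lemma dyadic_ratio_gt0 (m : R) : 0 < dyadic_ratio m.
Proof. by rewrite /dyadic_ratio !mulr_gt0 ?invr_gt0 ?exprn_gt0 ?expR_gt0. Qed.

Lemma dyadic_ratio_lt1 (m : R) : dyadic_ratio m < 1.
Proof.
rewrite /dyadic_ratio ltr_pdivrMr ?exprn_gt0 // mul1r.
have J_gt : 4 * expR (2 * m) < (dyadic_order m)%:R := Num.Theory.truncnS_gt _.
have pow_gt : (dyadic_order m)%:R < 2 ^+ dyadic_order m :> R.
  by rewrite -natrX ltr_nat ltn_expl.
have := expR_gt0 (2 * m); lra.
Qed.

Lemma dyadic_const_ge0 (m : R) : 0 <= dyadic_const m.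
Proof. by rewrite /dyadic_const !mulr_ge0 ?exprn_ge0 ?expR_ge0. Qed.

Lemma dyadic_weight_le (m : R) k :
  2 ^+ k * expR (1 - 2 ^+ k / 2) * expR (2 * m * k%:R)
    <= dyadic_const m * dyadic_ratio m ^+ k.
Proof.
set J := dyadic_order m; set P : R := 2 ^+ k; set s := P / 2.
have P0 : 0 < P by rewrite exprn_gt0.
have s0 : 0 < s by rewrite divr_gt0.
have pow_le_expR : s ^+ J / J`!%:R <= expR s.
  apply: le_trans (expR_ge1Dxn (Num.truncn (4 * expR (2 * m))) (ltW s0)).
  by rewrite lerDr.
have expRN_le : (expR s)^-1 <= J`!%:R * 2 ^+ J / P ^+ J.
  rewrite -lef_pV2 ?posrE ?expR_gt0 ?divr_gt0 ?exprn_gt0 ?ltr0n ?fact_gt0 // in pow_le_expR.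
  apply: le_trans pow_le_expR _; rewrite /s expr_div_n invfM invrK.
  rewrite le_eqVlt; apply/orP; left; apply/eqP.
  by field; rewrite !expf_neq0 ?pnatr_eq0 ?gt_eqF ?fact_gt0.
rewrite expRD expRN expRM_natr /dyadic_const /dyadic_ratio -/J.
rewrite expr_div_n exprMn -exprAC -/P.
set G := expR (2 * m) ^+ k.
have G0 : 0 < G by rewrite exprn_gt0 ?expR_gt0.
rewrite (_ : P * (expR 1 * (expR s)^-1) * G = (P * expR 1 * G) * (expR s)^-1); last by ring.
apply: le_trans (ler_wpM2l _ expRN_le) _; first by rewrite !mulr_ge0 ?ltW ?expR_gt0.
rewrite le_eqVlt; apply/orP; left; apply/eqP.
by field; rewrite expf_neq0 ?gt_eqF.
Qed.

Lemma exists_dyadic_scale (d y : R) : 0 <= d -> 0 < y ->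
  exists k, d < 2 ^+ k * y /\ 2 ^+ k * y <= 2 * (d + y).
Proof.
move=> d0 y0; have ex_k : exists k, d < 2 ^+ k * y.
  exists (Num.truncn (d / y)).+1; rewrite -ltr_pdivrMr //.
  apply: lt_trans (Num.Theory.truncnS_gt _) _.
  by rewrite -natrX ltr_nat ltn_expl.
case: (ex_minnP ex_k) => -[|k] dk kmin.
  by exists 0%N; rewrite expr0 mul1r in dk *; split=> //; lra.
exists k.+1; split => //.
have : ~~ (d < 2 ^+ k * y) by apply/negP => /kmin; rewrite ltnn.
by rewrite -leNgt exprS -mulrA; lra.
Qed.

Section dyadic_decomposition.
Variables (C0 CJN : R) (ur ui phr phi : R -> R) (C x y : R).
Hypotheses (C0_gt0 : 0 < C0) (JN : JN_constants C0 CJN) (u_BMO : in_BMO ur ui).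
Hypotheses (C_gt0 : 0 < C) (y_gt0 : 0 < y).
Hypothesis phi_decay : forall s, cabs (phr s) (phi s) <= C * expR (- `|s|).
Hypotheses (mphr : measurable_fun setT phr) (mphi : measurable_fun setT phi).

Local Notation m := (fine (bmo_norm ur ui)).
Local Notation lo k := (x - 2 ^+ k * y).
Local Notation up k := (x + 2 ^+ k * y).

Hypothesis m_lt_CJN : m < CJN.

Definition kernel_weight (t : R) : R := y^-1 * cabs (phr ((x - t) / y)) (phi ((x - t) / y)).

Definition dyadic_coef k : R := y^-1 * C * expR (1 - 2 ^+ k / 2) * expR (2 * m * k%:R).

Definition dyadic_piece k : R -> \bar R :=
  (fun t => (dyadic_coef k * expR (cdev ur ui (lo k) (up k) t))%:E) \_ (Ioo (lo k) (up k)).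

Definition dyadic_bound : R := 2 * C * exp_mean_bound C0 CJN m * dyadic_const m.

Lemma dyadic_coef_ge0 k : 0 <= dyadic_coef k.
Proof. by rewrite /dyadic_coef !mulr_ge0 ?invr_ge0 ?expR_ge0 ?ltW. Qed.

Lemma dyadic_piece_ge0 k t : (0 <= dyadic_piece k t)%E.
Proof.
rewrite /dyadic_piece patchE; case: ifP => // _.
by rewrite lee_fin mulr_ge0 ?dyadic_coef_ge0 ?expR_ge0.
Qed.

Lemma dyadic_bound_ge0 : 0 <= dyadic_bound.
Proof.
have A_gt0 := exp_mean_bound_gt0 C0 (fine_bmo_norm_ge0 ur ui) m_lt_CJN.
apply: mulr_ge0 (dyadic_const_ge0 _); apply: mulr_ge0 (ltW A_gt0).
by rewrite mulr_ge0 ?(ltW C_gt0).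
Qed.

Lemma integrand_le_dyadic_piece t : exists k,
  ((kernel_weight t * expR (cdev ur ui (x - y) (x + y) t))%:E <= dyadic_piece k t)%E.
Proof.
have [k [xt_lt xt_ge]] := exists_dyadic_scale (normr_ge0 (x - t)) y_gt0.
exists k; have t_in : Ioo (lo k) (up k) t.
  by move: xt_lt; rewrite ltr_norml => /andP[? ?]; apply/andP; split; lra.
rewrite /dyadic_piece patchE mem_set // lee_fin /kernel_weight /dyadic_coef.
have kernel_le : cabs (phr ((x - t) / y)) (phi ((x - t) / y)) <= C * expR (1 - 2 ^+ k / 2).
  apply: le_trans (phi_decay _) _.
  rewrite ler_pM2l // ler_expR normrM normfV (gtr0_norm y_gt0).
  have yV : y * y^-1 = 1 by rewrite divff ?gt_eqF.
  have yV0 : 0 < y^-1 by rewrite invr_gt0.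
  have := ler_wpM2r (ltW yV0) xt_ge; rewrite -mulrA yV mulr1.
  nra.
have cdev_le : cdev ur ui (x - y) (x + y) t <= cdev ur ui (lo k) (up k) t + 2 * m * k%:R.
  apply: le_trans (cdev_le_avg_dist ur ui _ _ (lo k) (up k) t) _.
  by rewrite lerD2l; exact: avg_dist_dyadic_le.
rewrite [X in _ <= X](_ : _ = y^-1 * (C * expR (1 - 2 ^+ k / 2))
    * (expR (cdev ur ui (lo k) (up k) t) * expR (2 * m * k%:R))); last by ring.
rewrite -expRD; apply: ler_pM; rewrite ?mulr_ge0 ?invr_ge0 ?cabs_ge0 ?expR_ge0 ?(ltW y_gt0) //.
  by rewrite ler_wpM2l ?invr_ge0 ?(ltW y_gt0).
by rewrite ler_expR.
Qed.

Lemma integral_dyadic_piece_le k :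
  (\int[mu]_(t in [set: R]) dyadic_piece k t <= (dyadic_bound * dyadic_ratio m ^+ k)%:E)%E.
Proof.
have [hr [hi _]] := u_BMO.
have ab : lo k < up k by have := mulr_gt0 (exprn_gt0 k (@ltr0Sn R 1)) y_gt0; lra.
rewrite /dyadic_piece -integral_mkcond; under eq_integral do rewrite EFinM.
rewrite ge0_integralZl_EFin ?dyadic_coef_ge0 //; last 2 first.
- exact: measurable_Ioo.
- apply/measurable_EFinP; apply: measurableT_comp => //.
  by apply: (measurable_funS measurableT) => //; exact: measurable_cdev.
apply: le_trans (lee_wpmul2l _ (integral_expR_cdev_le C0_gt0 JN u_BMO m_lt_CJN ab)) _.
  by rewrite lee_fin dyadic_coef_ge0.
rewrite -EFinM lee_fin /dyadic_bound -mulrA.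
rewrite (_ : dyadic_coef k * _ = 2 * C * exp_mean_bound C0 CJN m
    * (2 ^+ k * expR (1 - 2 ^+ k / 2) * expR (2 * m * k%:R))).
  apply: ler_wpM2l (dyadic_weight_le m k).
  have A_gt0 := exp_mean_bound_gt0 C0 (fine_bmo_norm_ge0 ur ui) m_lt_CJN.
  by apply: mulr_ge0 (ltW A_gt0); rewrite mulr_ge0 ?(ltW C_gt0).
by rewrite /dyadic_coef; field; rewrite gt_eqF.
Qed.

Lemma integral_le_nneseries_dyadic_pieces :
  (\int[mu]_(t in [set: R]) (kernel_weight t * expR (cdev ur ui (x - y) (x + y) t))%:E
    <= \sum_(k <oo) \int[mu]_(t in [set: R]) dyadic_piece k t)%E.
Proof.
have [hr [hi _]] := u_BMO.
have m_piece k : measurable_fun setT (dyadic_piece k).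
  apply/(measurable_restrictT _ _).1; first exact: measurable_Ioo.
  apply/measurable_EFinP; apply: measurable_funM => //.
  apply: measurableT_comp => //; apply: (measurable_funS measurableT) => //.
  exact: measurable_cdev.
have m_scale : measurable_fun (setT : set (measurableTypeR R)) (fun t => (x - t) / y).
  by apply: measurable_funM => //; apply: measurable_funB.
rewrite -integral_nneseries //; last by move=> k t _; exact: dyadic_piece_ge0.
apply: ge0_le_integral => //.
- by move=> t _; rewrite lee_fin !mulr_ge0 ?expR_ge0 ?invr_ge0 ?cabs_ge0 ?(ltW y_gt0).
- apply/measurable_EFinP; apply: measurable_funM; last first.
    by apply: measurableT_comp => //; exact: measurable_cdev.
  apply: measurable_funM => //.
  by apply: measurable_cabs; [exact: measurableT_comp mphr m_scale|exact: measurableT_comp mphi m_scale].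
- by apply: ge0_emeasurable_sum => k *; [exact: dyadic_piece_ge0|exact: m_piece].
move=> t _; have [k piece_k] := integrand_le_dyadic_piece t.
exact: le_trans piece_k (nneseries_ge_term k (dyadic_piece_ge0^~ t)).
Qed.

Lemma integral_kernel_expR_cdev_le :
  (\int[mu]_(t in [set: R]) (kernel_weight t * expR (cdev ur ui (x - y) (x + y) t))%:E
    <= (dyadic_bound / (1 - dyadic_ratio m))%:E)%E.
Proof.
apply: le_trans integral_le_nneseries_dyadic_pieces _.
apply: le_trans (nneseries_geometric_le dyadic_bound_ge0 (dyadic_ratio_gt0 _) (dyadic_ratio_lt1 _)).
apply: lee_nneseries => [k _ _|k _]; last exact: integral_dyadic_piece_le.
by apply: integral_ge0 => t _; exact: dyadic_piece_ge0.
Qed.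

End dyadic_decomposition.

End real_line.

Theorem proposition2p5 (R : realType) (C0 CJN : R) :
  0 < C0 -> 0 < CJN -> JN_constants C0 CJN ->
  exists F : R -> R -> R,
    forall (ur ui phr phi : R -> R) (C : R),
      in_BMO ur ui ->
      0 < C ->
      measurable_fun setT phr -> measurable_fun setT phi ->
      (forall x : R, cabs (phr x) (phi x) <= C * expR (- `|x|)) ->
      (bmo_norm ur ui < CJN%:E)%E ->
      forall x y : R, 0 < y ->
        (\int[lebesgue_measure]_(t in [set: R])
            ((y^-1 * cabs (phr ((x - t) / y)) (phi ((x - t) / y)))
             * expR (cdev ur ui (x - y) (x + y) t))%:E
         <= (F (fine (bmo_norm ur ui)) C)%:E)%E.
Proof.
move=> C0_gt0 _ JN.
exists (fun m C => 2 * C * exp_mean_bound C0 CJN m * dyadic_const m / (1 - dyadic_ratio m)).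
move=> ur ui phr phi C u_BMO C_gt0 mphr mphi phi_decay bmo_lt x y y_gt0.
have m_lt_CJN : fine (bmo_norm ur ui) < CJN by move: bmo_lt; rewrite bmo_normE // lte_fin.
exact: integral_kernel_expR_cdev_le.
Qed.
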